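(* Let $G\ge 2$ and $p_t\in(0,1)$. Let $r_{t,1},\dots,r_{t,G}$ be i.i.d. $\mathrm{Bernoulli}(p_t)$, $R=\sum_j r_{t,j}$, $\hat p_t=R/G$, $\mathcal S=\{1\le R\le G-1\}$, and for a real constant $c$ let $\tilde p_t=c\,\hat p_t$. Let $\epsilon\in(0,|p_t-\hat p_t|)$. If \[ c\in\left(\frac{(p_t-\epsilon)\bigl(1-(1-p_t)^G-p_t^G\bigr)}{p_t(1-p_t^{G-1})},\ \frac{(p_t+\epsilon)\bigl(1-(1-p_t)^G-p_t^G\bigr)}{p_t(1-p_t^{G-1})}\right), \] then $\mathbb E[\tilde p_t\mid\mathcal S]\in(p_t-\epsilon,\ p_t+\epsilon)$.
   Context: Binary-reward group setting: $p_t$ is the expected reward, $\hat p_t$ the group baseline, $\tilde p_t$ the rescaled baseline, $\mathcal S$ the event that the group rewards are not all equal. *)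

From HB Require Import structures.
From mathcomp Require Import all_boot all_order all_algebra.
Set Implicit Arguments. Unset Strict Implicit. Unset Printing Implicit Defensive.
Import Order.TTheory GRing.Theory Num.Theory.
Local Open Scope ring_scope.

Definition bern_prob (R : realFieldType) (G : nat) (p : R)
  (w : {ffun 'I_G -> bool}) : R :=
  \prod_(i < G) (if w i then p else 1 - p).

Definition nsucc (G : nat) (w : {ffun 'I_G -> bool}) : nat :=
  (\sum_(i < G) (w i : nat))%N.

Definition phat (R : realFieldType) (G : nat) (w : {ffun 'I_G -> bool}) : R :=
  (nsucc w)%:R / G%:R.

Definition eventS (G : nat) (w : {ffun 'I_G -> bool}) : bool :=
  (1 <= nsucc w <= G - 1)%N.

Definition cond_exp (R : realFieldType) (G : nat) (p : R)
  (E : pred {ffun 'I_G -> bool}) (X : {ffun 'I_G -> bool} -> R) : R :=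
  (\sum_(w | E w) bern_prob p w * X w) / (\sum_(w | E w) bern_prob p w).

From HB Require Import structures.
From mathcomp Require Import all_boot all_order all_algebra.
From mathcomp Require Import zify ring lra.
Import Order.TTheory GRing.Theory Num.Theory.
Local Open Scope ring_scope.

(* Conditioning on S only discards the two constant outcomes, of
   probabilities (1 - p)^G and p^G.  The estimate p̂ vanishes on the first
   and equals 1 on the second, while E[p̂] = p, so
     E[p̂ | S] = (p - p^G) / (1 - (1 - p)^G - p^G).
   Thus E[c p̂ | S] is c times a positive constant, and it lies in
   (p - eps, p + eps) exactly when c lies in the stated interval. *)

Lemma nonconstant_prob_gt0 {R : realDomainType} {n : nat} {x : R} :
  (1 < n)%N -> 0 < x < 1 -> 0 < 1 - (1 - x) ^+ n - x ^+ n.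
Proof.
move=> n_gt1 /andP[x0 x1].
have := ltr_iXnr n x0 x1; have := ltr_iXnr n (_ : 0 < 1 - x) (_ : 1 - x < 1).
rewrite n_gt1 subr_gt0 x1 gtrBl x0; lra.
Qed.

Section BernoulliRewards.
Variables (R : realFieldType) (G : nat) (p : R).

Local Notation outcome := {ffun 'I_G -> bool}.

Definition const_outcome (b : bool) : outcome := [ffun => b].

Lemma cond_expZ (E : pred outcome) (c : R) (X : outcome -> R) :
  cond_exp p E (fun w => c * X w) = c * cond_exp p E X.
Proof.
rewrite /cond_exp mulrA mulr_sumr; congr (_ / _).
by apply: eq_bigr => w _; rewrite mulrCA.
Qed.

Lemma sum_bern_prob : \sum_(w : outcome) bern_prob p w = 1.
Proof.
rewrite /bern_prob -(bigA_distr_bigA (fun _ (b : bool) => if b then p else 1 - p)).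
by apply: big1 => i _; rewrite big_bool /= addrC subrK.
Qed.

Lemma sum_bern_prob_coord (i : 'I_G) :
  \sum_(w : outcome) bern_prob p w * (w i : nat)%:R = p.
Proof.
pose F j (b : bool) := if b then p else if j == i then 0 else 1 - p.
have bern_coordE w : bern_prob p w * (w i : nat)%:R = \prod_j F j (w j).
  rewrite /bern_prob (bigD1 i) //= [RHS](bigD1 i) //= /F eqxx.
  rewrite [in RHS](eq_bigr (fun j => if w j then p else 1 - p)); last first.
    by move=> j /negbTE ji; rewrite ji.
  by case: (w i); rewrite /= ?mulr1 ?mulr0 ?mul0r.
under eq_bigr do rewrite bern_coordE.
rewrite -(bigA_distr_bigA F) (bigD1 i) //= big_bool /F eqxx /= addr0 big1 ?mulr1 //.
by move=> j /negbTE ji; rewrite big_bool /= ji addrC subrK.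
Qed.

Lemma sum_bern_prob_nsucc :
  \sum_(w : outcome) bern_prob p w * (nsucc w)%:R = G%:R * p.
Proof.
under eq_bigr do rewrite /nsucc natr_sum mulr_sumr.
rewrite exchange_big /=; under eq_bigr do rewrite sum_bern_prob_coord.
by rewrite sumr_const card_ord mulr_natl.
Qed.

Lemma bern_prob_const (b : bool) :
  bern_prob p (const_outcome b) = (if b then p else 1 - p) ^+ G.
Proof.
rewrite /bern_prob (eq_bigr (fun=> if b then p else 1 - p)) ?prodr_const ?card_ord //.
by move=> i _; rewrite ffunE.
Qed.

Lemma nsucc_add_nfail (w : outcome) :
  (nsucc w + \sum_(i < G) (~~ w i : nat))%N = G.
Proof.
rewrite /nsucc -big_split /= -[RHS]card_ord -sum1_card.
by apply: eq_bigr => i _; case: (w i).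
Qed.

Lemma sum_neq_eq0 (b : bool) (w : outcome) :
  (\sum_(i < G) (w i != b : nat) == 0)%N = (w == const_outcome b).
Proof.
rewrite (sum_nat_eq0 xpredT); apply/forallP/eqP => [w_b | ->]; last first.
  by move=> i; rewrite ffunE eqxx.
by apply/ffunP => i; rewrite ffunE; have := w_b i; case: (w i =P b).
Qed.

Lemma nsucc_eq0 (w : outcome) : (nsucc w == 0)%N = (w == const_outcome false).
Proof. by rewrite -sum_neq_eq0; congr (_ == _); apply: eq_bigr => i _; case: (w i). Qed.

Lemma nsucc_eqG (w : outcome) : (nsucc w == G)%N = (w == const_outcome true).
Proof.
rewrite -sum_neq_eq0.
have -> : (\sum_(i < G) (w i != true : nat) = \sum_(i < G) (~~ w i : nat))%N.
  by apply: eq_bigr => i _; case: (w i).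
by have := nsucc_add_nfail w; lia.
Qed.

Lemma nsucc_const (b : bool) : nsucc (const_outcome b) = if b then G else 0%N.
Proof. by case: b; apply/eqP; rewrite ?nsucc_eqG ?nsucc_eq0. Qed.

Hypothesis G_gt0 : (0 < G)%N.

Lemma eventSN (w : outcome) :
  ~~ eventS w = (w == const_outcome false) || (w == const_outcome true).
Proof. by rewrite -nsucc_eq0 -nsucc_eqG /eventS; have := nsucc_add_nfail w; lia. Qed.

Lemma sum_eventS (f : outcome -> R) :
  \sum_(w | eventS w) f w =
  \sum_w f w - f (const_outcome false) - f (const_outcome true).
Proof.
have const_neq : const_outcome false != const_outcome true.
  by apply/eqP => /ffunP /(_ (Ordinal G_gt0)); rewrite !ffunE.
have sum_const : \sum_(w | ~~ eventS w) f w =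
    f (const_outcome false) + f (const_outcome true).
  rewrite (eq_bigl _ _ eventSN) (bigD1 (const_outcome false)) ?eqxx //=.
  rewrite (big_pred1 (const_outcome true)) // => w /=.
  by case: eqVneq => [->|] /=; rewrite ?andbT // (negbTE const_neq).
by rewrite [\sum_w f w](bigID (@eventS G)) /= sum_const; ring.
Qed.

Lemma prob_eventS :
  \sum_(w : outcome | eventS w) bern_prob p w = 1 - (1 - p) ^+ G - p ^+ G.
Proof. by rewrite sum_eventS sum_bern_prob !bern_prob_const. Qed.

Lemma phat_const (b : bool) : phat R (const_outcome b) = b%:R.
Proof. by rewrite /phat nsucc_const; case: b; rewrite ?mul0r // divff // pnatr_eq0 -lt0n. Qed.

Lemma sum_eventS_phat :
  \sum_(w : outcome | eventS w) bern_prob p w * phat R w = p * (1 - p ^+ G.-1).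
Proof.
rewrite sum_eventS !phat_const !bern_prob_const mulr0 mulr1 subr0.
under eq_bigr do rewrite /phat mulrA.
rewrite -mulr_suml sum_bern_prob_nsucc mulrAC divff ?mul1r ?pnatr_eq0 -?lt0n //.
by rewrite -{1}(prednK G_gt0) exprS mulrBr mulr1.
Qed.

Lemma cond_exp_phat :
  cond_exp p (@eventS G) (@phat R G) =
  p * (1 - p ^+ G.-1) / (1 - (1 - p) ^+ G - p ^+ G).
Proof. by rewrite /cond_exp sum_eventS_phat prob_eventS. Qed.

End BernoulliRewards.

Theorem lemma3 (R : realFieldType) (G : nat) (p c eps : R) :
  (2 <= G)%N -> 0 < p < 1 ->
  0 < eps ->
  eps < `|p - cond_exp p (@eventS G) (@phat R G)| ->
  (p - eps) * (1 - (1 - p) ^+ G - p ^+ G) / (p * (1 - p ^+ G.-1)) < c ->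
  c < (p + eps) * (1 - (1 - p) ^+ G - p ^+ G) / (p * (1 - p ^+ G.-1)) ->
  p - eps < cond_exp p (@eventS G) (fun w => c * phat R w) /\
  cond_exp p (@eventS G) (fun w => c * phat R w) < p + eps.
Proof.
move=> G_gt1 p01 _ _ c_gt c_lt.
have G_gt0 : (0 < G)%N by apply: ltnW.
have prob_gt0 := nonconstant_prob_gt0 G_gt1 p01.
have num_gt0 : 0 < p * (1 - p ^+ G.-1).
  case/andP: p01 => p0 p1.
  by rewrite mulr_gt0 // subr_gt0 exprn_ilt1 ?ltW // -lt0n -ltnS prednK.
rewrite cond_expZ cond_exp_phat // mulrA.
rewrite ltr_pdivlMr // ltr_pdivrMr //.
by move: c_gt c_lt; rewrite ltr_pdivrMr // ltr_pdivlMr.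
Qed.
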